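(* For natural concepts $C_1,C_2,D_1,D_2$: $\{C_1:C_2::D_1:D_2\}\models C_2:C_1::D_2:D_1$, i.e. every model of the TBox consisting of the analogy assertion $C_1:C_2::D_1:D_2$ satisfies the analogy assertion $C_2:C_1::D_2:D_1$.
   Context: Concepts: $C,D::=\top\mid\bot\mid A\mid C\sqcap D\mid \exists r.C\mid N$; natural concepts: $N,N'::=A'\mid N\sqcap N'\mid N\bowtie N'\mid \exists r'.N$, with $A$ a concept name, $A'$ a natural concept name, $r$ a role name, $r'$ an intra-domain role name. A domain constrained interpretation is $\mathfrak{I}=(\mathcal{I},[\mathcal{F}_1,\dots,\mathcal{F}_k],\mathcal{X},\pi,\sim,\mathcal{S})$ where $\mathcal{I}=(\Delta^{\mathcal{I}},\cdot^{\mathcal{I}})$ is a classical DL interpretation, $[\mathcal{F}_1,\dots,\mathcal{F}_k]$ partitions a nonempty finite set $\mathcal{F}$, $\mathcal{X}\subseteq2^{\mathcal{F}}$ with $\mathcal{F}\in\mathcal{X}$, $\pi:\Delta^{\mathcal{I}}\to2^{\mathcal{F}}$, $\sim$ an equivalence relation on $\{1,\dots,k\}$, $\mathcal{S}=\{\sigma_{(s,t)}\mid(s,t)\in\sim\}$ with $\sigma_{(s,t)}:\mathcal{F}_s\to\mathcal{F}_t$ bijections. With $\mathcal{C}=\{G\subseteq\mathcal{F}\mid X\not\subseteq G\ \forall X\in\mathcal{X}\}$ and $\mathcal{C}^i=\{G\in\mathcal{C}\mid G\subseteq\mathcal{F}_i\}$ it is required: (1) $X\not\subseteq\pi(d)$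 for all $d$, $X\in\mathcal{X}$; (2) each $G\in\mathcal{C}$ is $\pi(d)$ for some $d$; (3) $\sigma_{(s,t)}^{-1}=\sigma_{(t,s)}$, $\sigma_{(t,u)}\circ\sigma_{(s,t)}=\sigma_{(s,u)}$; (4) $\sigma_{(i,j)}(G)\in\mathcal{C}$ for $G\in\mathcal{C}^i$, $(i,j)\in\sim$; (5) $\{f,g\}\in\mathcal{X}$ whenever $f\in\mathcal{F}_i$, $g\in\mathcal{F}_j$, $(i,j)\in\sim$, $i\neq j$. $\varphi(C)=\bigcap\{\pi(d)\mid d\in C^{\mathcal{I}}\}$ ($=\mathcal{F}$ if $C^{\mathcal{I}}=\emptyset$). Concepts are interpreted as usual, with $(N\bowtie N')^{\mathcal{I}}=\{d\mid\varphi(N)\cap\varphi(N')\subseteq\pi(d)\}$. An intra-domain relation $r$: there is $\kappa_r:2^{\mathcal{F}}\to2^{\mathcal{F}}$ with $(\exists r.C)^{\mathcal{I}}=\{d\mid\kappa_r(\varphi(C))\subseteq\pi(d)\}$ for all $C$, $\kappa_r(G)=\bigcup_i\kappa_r(G\cap\mathcal{F}_i)$ for $G\in\mathcal{C}$, $\kappa_r(G)\subseteq\mathcal{F}_i$ for $G\in\mathcal{C}^i$, $\kappa_r(\sigma_{(i,j)}(G))=\sigma_{(i,j)}(\kappa_r(G))$ for $(i,j)\in\sim$, $G\in\mathcal{C}^i$, and $\kappa_r(G)\neq\emptyset$ for $G\in\mathcal{C}^i\setminus\{\emptyset\}$. $\delta(C)=\{i\mid\mathcal{F}_i\cap\varphi(C)\neq\emptyset\}$.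 For $U=\{(s_1,t_1),\dots,(s_l,t_l)\}\subseteq\sim$ with pairwise distinct $s_i$ and pairwise distinct $t_i$, the domain translation $\sigma_U:\mathcal{F}\to\mathcal{F}$ maps $f\in\mathcal{F}_{s_i}$ to $\sigma_{(s_i,t_i)}(f)$ and fixes all other features; $\mathrm{src}(U)=\{s_i\}$, $\mathrm{tgt}(U)=\{t_i\}$. $\mu(C,D)$ is the set of $\sigma_U$ with $\varphi(D)=\sigma_U(\varphi(C))$, $\mathrm{src}(U)\subseteq\delta(C)$, $\mathrm{tgt}(U)\cap(\delta(C)\setminus\mathrm{src}(U))=\emptyset$. An analogy assertion $C_1:C_2::D_1:D_2$ (between natural concepts) is satisfied in $\mathfrak{I}$ iff $\mu(C_1,C_2)\cap\mu(D_1,D_2)\neq\emptyset$; a concept inclusion $C\sqsubseteq D$ is satisfied iff $C^{\mathcal{I}}\subseteq D^{\mathcal{I}}$. A TBox is a finite set of concept inclusions and analogy assertions. $\mathfrak{I}$ is a model of a TBox $\mathcal{T}$ if it satisfies all its elements, every natural concept $N$ in $\mathcal{T}$ satisfies $N^{\mathcal{I}}=\{d\mid\varphi(N)\subseteq\pi(d)\}$, and every intra-domain role name is interpreted as an intra-domain relation. $\mathcal{T}\models\psi$ means every model of $\mathcal{T}$ satisfies $\psi$. *)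

From mathcomp Require Import all_boot.
From mathcomp Require Import boolp.
Set Warnings "-notation-overridden".
Set Implicit Arguments.
Unset Strict Implicit.
Unset Printing Implicit Defensive.

(* Role names: ordinary role names and intra-domain role names. *)
Inductive role := RName of nat | IRName of nat.

Inductive natconcept :=
| NName of nat
| NAnd of natconcept & natconcept
| NBowtie of natconcept & natconcept
| NEx of nat & natconcept.           (* ∃ (IRName r') . N *)

Inductive concept :=
| CTop | CBot
| CName of nat
| CAnd of concept & concept
| CEx of role & concept
| CNat of natconcept.

Inductive axiom :=
| Incl of concept & concept
| Analogy of natconcept & natconcept & natconcept & natconcept.

Definition tbox := seq axiom.

Record dcinterp := DCInterp {
  Dom : Type;
  Feat : finType;
  nblk : nat;
  blk : Feat -> 'I_nblk;                   (* f ∈ F_(blk f) : the partition *)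
  Xs : {set {set Feat}};
  pi : Dom -> {set Feat};
  sim : rel 'I_nblk;
  sigma : 'I_nblk -> 'I_nblk -> Feat -> Feat; (* σ_(s,t), relevant on F_s for s ~ t *)
  cI : nat -> Dom -> Prop;
  nI : nat -> Dom -> Prop;
  rI : role -> Dom -> Dom -> Prop
}.

Arguments Dom : clear implicits.
Arguments Feat : clear implicits.
Arguments nblk : clear implicits.
Arguments blk : clear implicits.
Arguments Xs : clear implicits.
Arguments pi : clear implicits.
Arguments sim : clear implicits.
Arguments sigma : clear implicits.
Arguments cI : clear implicits.
Arguments nI : clear implicits.
Arguments rI : clear implicits.

Section Semantics.
Variable I : dcinterp.
Local Notation D := (Dom I).
Local Notation F := (Feat I).
Local Notation k := (nblk I).

Definition Fi (i : 'I_k) : {set F} := [set f | blk I f == i].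

(* φ of a set of elements: ⋂ {π(d) | d ∈ S}, = F if S is empty *)
Definition phi (S : D -> Prop) : {set F} :=
  [set f | `[< forall d, S d -> f \in pi I d >] ].

Definition inC (G : {set F}) : bool := [forall X in Xs I, ~~ (X \subset G)].
Definition inCi (i : 'I_k) (G : {set F}) : bool := inC G && (G \subset Fi i).

Fixpoint next (N : natconcept) : D -> Prop :=
  match N with
  | NName a => nI I a
  | NAnd N1 N2 => fun d => next N1 d /\ next N2 d
  | NBowtie N1 N2 => fun d => phi (next N1) :&: phi (next N2) \subset pi I d
  | NEx r N1 => fun d => exists e, rI I (IRName r) d e /\ next N1 e
  end.

Fixpoint ext (C : concept) : D -> Prop :=
  match C with
  | CTop => fun _ => True
  | CBot => fun _ => False
  | CName a => cI I a
  | CAnd C1 C2 => fun d => ext C1 d /\ ext C2 d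
  | CEx r C1 => fun d => exists e, rI I r d e /\ ext C1 e
  | CNat N => next N
  end.

Definition is_dcinterp : Prop :=
  (0 < #|F|) /\ (forall i : 'I_k, exists f : F, blk I f = i) /\
  ([set: F] \in Xs I) /\
  (forall i, sim I i i) /\ (forall i j, sim I i j -> sim I j i) /\
  (forall i j l, sim I i j -> sim I j l -> sim I i l) /\
  (forall s t, sim I s t ->
     {in Fi s, forall f, sigma I s t f \in Fi t} /\
     {in Fi s &, injective (sigma I s t)} /\
     (forall g, g \in Fi t -> exists2 f, f \in Fi s & sigma I s t f = g)) /\
  (forall d X, X \in Xs I -> ~~ (X \subset pi I d)) /\
  (forall G, inC G -> exists d, pi I d = G) /\
  (forall s t, sim I s t -> {in Fi s, forall f, sigma I t s (sigma I s t f) = f}) /\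
  (forall s t u, sim I s t -> sim I t u ->
     {in Fi s, forall f, sigma I t u (sigma I s t f) = sigma I s u f}) /\
  (forall i j G, sim I i j -> inCi i G -> inC (sigma I i j @: G)) /\
  (forall i j f g, sim I i j -> i != j -> f \in Fi i -> g \in Fi j ->
     [set f; g] \in Xs I).

Definition intra_domain (r : role) : Prop :=
  exists kappa : {set F} -> {set F},
    (forall C d, ext (CEx r C) d <-> kappa (phi (ext C)) \subset pi I d) /\
    (forall G, inC G -> kappa G = \bigcup_(i < k) kappa (G :&: Fi i)) /\
    (forall i G, inCi i G -> kappa G \subset Fi i) /\
    (forall i j G, sim I i j -> inCi i G ->
       kappa (sigma I i j @: G) = sigma I i j @: kappa G) /\
    (forall i G, inCi i G -> G != set0 -> kappa G != set0).

Definition delta (S : D -> Prop) : {set 'I_k} :=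
  [set i | phi S :&: Fi i != set0].

Definition validU (U : {set 'I_k * 'I_k}) : Prop :=
  (forall p, p \in U -> sim I p.1 p.2) /\
  {in U &, forall p q, p.1 = q.1 -> p = q} /\
  {in U &, forall p q, p.2 = q.2 -> p = q}.

Definition sigmaU (U : {set 'I_k * 'I_k}) (f : F) : F :=
  match [pick p in U | p.1 == blk I f] with
  | Some p => sigma I p.1 p.2 f
  | None => f
  end.

Definition src (U : {set 'I_k * 'I_k}) : {set 'I_k} := [set p.1 | p in U].
Definition tgt (U : {set 'I_k * 'I_k}) : {set 'I_k} := [set p.2 | p in U].

Definition in_mu (g : F -> F) (SC SD : D -> Prop) : Prop :=
  exists U, validU U /\ g =1 sigmaU U /\
    phi SD = g @: phi SC /\
    src U \subset delta SC /\
    tgt U :&: (delta SC :\: src U) = set0.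

Definition sat_axiom (a : axiom) : Prop :=
  match a with
  | Incl C1 C2 => forall d, ext C1 d -> ext C2 d
  | Analogy N1 N2 N3 N4 =>
      exists g : F -> F, in_mu g (next N1) (next N2) /\ in_mu g (next N3) (next N4)
  end.

End Semantics.

Arguments Fi : clear implicits.
Arguments phi : clear implicits.
Arguments inC : clear implicits.
Arguments inCi : clear implicits.
Arguments next : clear implicits.
Arguments ext : clear implicits.
Arguments is_dcinterp : clear implicits.
Arguments intra_domain : clear implicits.
Arguments delta : clear implicits.
Arguments validU : clear implicits.
Arguments sigmaU : clear implicits.
Arguments src : clear implicits.
Arguments tgt : clear implicits.
Arguments in_mu : clear implicits.
Arguments sat_axiom : clear implicits.

Fixpoint occursN (M N : natconcept) : Prop :=
  M = N \/
  match N with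
  | NName _ => False
  | NAnd N1 N2 | NBowtie N1 N2 => occursN M N1 \/ occursN M N2
  | NEx _ N1 => occursN M N1
  end.

Fixpoint occursC (M : natconcept) (C : concept) : Prop :=
  match C with
  | CTop | CBot | CName _ => False
  | CAnd C1 C2 => occursC M C1 \/ occursC M C2
  | CEx _ C1 => occursC M C1
  | CNat N => occursN M N
  end.

Definition occursA (M : natconcept) (a : axiom) : Prop :=
  match a with
  | Incl C1 C2 => occursC M C1 \/ occursC M C2
  | Analogy N1 N2 N3 N4 => occursN M N1 \/ occursN M N2 \/ occursN M N3 \/ occursN M N4
  end.

Fixpoint inT (a : axiom) (T : tbox) : Prop :=
  match T with [::] => False | b :: T' => a = b \/ inT a T' end.

Definition is_model (T : tbox) (I : dcinterp) : Prop :=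
  is_dcinterp I /\
  (forall a, inT a T -> sat_axiom I a) /\
  (forall M a, inT a T -> occursA M a ->
     forall d, next I M d <-> phi I (next I M) \subset pi I d) /\
  (forall r, intra_domain I (IRName r)).

Definition entails (T : tbox) (psi : axiom) : Prop :=
  forall I : dcinterp, is_model T I -> sat_axiom I psi.

(* If g is the domain translation of U, then reversing the pairs (s, t) of U
   with s <> t gives a domain translation undoing g on every feature whose
   block is a source of U or not a target of U; the side condition on
   tgt(U) in the definition of mu guarantees this on phi(C), so the reversed
   translation lies in mu(D, C).  Moreover the non-trivial pairs of U are
   determined by the map sigma_U, so the two witnesses of the assumed
   analogy give the same reversed translation. *)
From mathcomp Require Import all_boot.
Set Implicit Arguments.
Unset Strict Implicit.
Unset Printing Implicit Defensive.

Section DomainTranslations.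
Variable I : dcinterp.
Hypothesis HI : is_dcinterp I.
Local Notation F := (Feat I).
Local Notation k := (nblk I).
Local Notation blk := (blk I).
Local Notation sigma := (sigma I).
Local Notation sigmaU := (sigmaU I).
Local Notation src := (src I).
Local Notation tgt := (tgt I).
Implicit Types (U : {set 'I_k * 'I_k}) (p : 'I_k * 'I_k) (f : F)
  (S : Dom I -> Prop).

Lemma sim_sym i j : sim I i j -> sim I j i.
Proof. by have [_ [_ [_ [_ [symI _]]]]] := HI; apply: symI. Qed.

Lemma blk_sigma s t f : sim I s t -> blk f = s -> blk (sigma s t f) = t.
Proof.
have [_ [_ [_ [_ [_ [_ [bijI _]]]]]]] := HI.
move=> st bf; have [mapI _] := bijI s t st.
have fs : f \in Fi I s by rewrite inE bf.
by have := mapI f fs; rewrite inE => /eqP.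
Qed.

Lemma sigmaK s t f : sim I s t -> blk f = s -> sigma t s (sigma s t f) = f.
Proof.
have [_ [_ [_ [_ [_ [_ [_ [_ [_ [invI _]]]]]]]]]] := HI.
by move=> st bf; apply: invI st _ _; rewrite inE bf.
Qed.

(* sigma_(s,s) is an involution by (3) and idempotent by the cocycle law. *)
Lemma sigma_refl s f : blk f = s -> sigma s s f = f.
Proof.
have [_ [_ [_ [reflI [_ [_ [_ [_ [_ [invI [compI _]]]]]]]]]]] := HI.
move=> bf; have fs : f \in Fi I s by rewrite inE bf.
by rewrite -{2}(invI s s (reflI s) f fs) (compI s s s (reflI s) (reflI s) f fs).
Qed.

Variant sigmaU_spec U f : F -> Prop :=
  | SigmaUSrc p of p \in U & p.1 = blk f : sigmaU_spec U f (sigma p.1 p.2 f)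
  | SigmaUNotSrc of blk f \notin src U : sigmaU_spec U f f.

Lemma sigmaUP U f : sigmaU_spec U f (sigmaU U f).
Proof.
rewrite /sigmaU; case: pickP => [p /andP[pU /eqP pf]|noU]; first exact: SigmaUSrc.
by apply: SigmaUNotSrc; apply/imsetP => -[p pU pf]; move: (noU p); rewrite pU -pf eqxx.
Qed.

Lemma sigmaU_src U p f :
  validU I U -> p \in U -> p.1 = blk f -> sigmaU U f = sigma p.1 p.2 f.
Proof.
move=> [_ [inj1 _]] pU pf; case: sigmaUP => [q qU qf | /imsetP[]]; last by exists p.
by rewrite (inj1 q p) // qf pf.
Qed.

Lemma sigmaU_notsrc U f : blk f \notin src U -> sigmaU U f = f.
Proof. by case: sigmaUP => // p pU pf /imsetP[]; exists p. Qed.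

Lemma blk_sigmaU_src U p f :
  validU I U -> p \in U -> p.1 = blk f -> blk (sigmaU U f) = p.2.
Proof.
move=> vU pU pf; rewrite (sigmaU_src vU pU pf).
by apply: blk_sigma; [case: vU => + _; apply | rewrite pf].
Qed.

Lemma deltaP S i : reflect (exists2 f, f \in phi I S & blk f = i) (i \in delta I S).
Proof.
rewrite inE; apply: (iffP (set0Pn _)) => [[f]|[f fS fi]].
  by rewrite in_setI => /andP[fS]; rewrite inE => /eqP; exists f.
by exists f; rewrite in_setI fS inE fi /=.
Qed.

Definition nontriv U := [set p in U | p.1 != p.2].
Definition invU U := [set (p.2, p.1) | p in nontriv U].

Lemma nontriv_subset U : nontriv U \subset U.
Proof. by apply/subsetP => p; rewrite inE => /andP[]. Qed.

Lemma mem_invU U s t : ((t, s) \in invU U) = ((s, t) \in nontriv U).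
Proof.
have swap_inj : injective (fun p : 'I_k * 'I_k => (p.2, p.1)) by move=> [? ?] [? ?] [-> ->].
exact: (mem_imset _ (s, t) swap_inj).
Qed.

Lemma src_invU U : src (invU U) = tgt (nontriv U).
Proof. by rewrite /src -imset_comp. Qed.

Lemma tgt_invU U : tgt (invU U) = src (nontriv U).
Proof. by rewrite /tgt -imset_comp. Qed.

Lemma validU_invU U : validU I U -> validU I (invU U).
Proof.
move=> [simU [inj1 inj2]]; have swap q : q \in invU U -> (q.2, q.1) \in nontriv U.
  by case: q => s t; rewrite mem_invU.
split; [|split].
- by move=> q /swap; rewrite inE => /andP[/simU /sim_sym].
- move=> [s t] [s' t'] /swap + /swap; rewrite !inE => /andP[qU _] /andP[q'U _] e.
  by case: (inj2 _ _ qU q'U e) => -> ->.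
- move=> [s t] [s' t'] /swap + /swap; rewrite !inE => /andP[qU _] /andP[q'U _] e.
  by case: (inj1 _ _ qU q'U e) => -> ->.
Qed.

Lemma sigmaU_nontriv_subset U U' : validU I U -> validU I U' ->
  sigmaU U =1 sigmaU U' -> nontriv U \subset nontriv U'.
Proof.
move=> vU vU' eqU; apply/subsetP => -[s t]; rewrite !inE /= => /andP[stU st].
have [_ [blkI _]] := HI; have [f fs] := blkI s.
have := blk_sigmaU_src vU stU (esym fs); rewrite eqU.
case: sigmaUP => [q qU' qf | _]; last by rewrite fs => /= ts; rewrite ts eqxx in st.
rewrite (blk_sigma (_ : sim I q.1 q.2)) //; last by case: vU' => + _; apply.
case: q qU' qf => q1 q2 qU' /= q1f q2t.
by rewrite -q2t -fs -q1f in st *; rewrite qU' st.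
Qed.

Lemma eq_sigmaU_invU U U' : validU I U -> validU I U' ->
  sigmaU U =1 sigmaU U' -> invU U = invU U'.
Proof.
move=> vU vU' eqU; rewrite /invU (_ : nontriv U = nontriv U') //.
by apply/eqP; rewrite eqEsubset !sigmaU_nontriv_subset //; apply: fsym.
Qed.

Lemma sigmaU_invUK U f : validU I U -> blk f \notin tgt U :\: src U ->
  sigmaU (invU U) (sigmaU U f) = f.
Proof.
move=> vU; have [simU [_ inj2]] := vU.
case: (sigmaUP U f) => [p pU pf _ | nsrc].
  case: (eqVneq p.1 p.2) => [p12 | p12].
    rewrite -p12 sigma_refl -?pf //; apply: sigmaU_notsrc.
    rewrite src_invU; apply/imsetP => -[q]; rewrite inE => /andP[qU q12] q2.
    have qp : q = p by apply: inj2; rewrite // -q2 -p12.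
    by rewrite qp p12 eqxx in q12.
  have pV : (p.2, p.1) \in invU U by rewrite mem_invU inE -surjective_pairing pU.
  rewrite (sigmaU_src (validU_invU vU) pV) /=; first by rewrite sigmaK ?simU.
  by rewrite (blk_sigma (simU p pU) (esym pf)).
move=> ntgt; apply: sigmaU_notsrc; rewrite src_invU.
apply: contra ntgt => /(subsetP (imsetS _ (nontriv_subset U))) tU.
by rewrite in_setD tU nsrc.
Qed.

Lemma blk_sigmaU_tgt_invU U f : validU I U ->
  blk (sigmaU U f) \in tgt (invU U) -> blk (sigmaU U f) \in src (invU U).
Proof.
move=> vU; have [simU [inj1 _]] := vU; rewrite tgt_invU src_invU.
case: (sigmaUP U f) => [p pU pf | nsrc].
  rewrite (blk_sigma (simU p pU) (esym pf)).
  case: (eqVneq p.1 p.2) => [p12 | p12]; last by move=> _; apply: imset_f; rewrite inE pU p12.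
  case/imsetP => q; rewrite inE => /andP[qU q12] q1.
  have qp : q = p by apply: inj1; rewrite // -q1 -p12.
  by rewrite qp p12 eqxx in q12.
by move=> /(subsetP (imsetS _ (nontriv_subset U))) fsrc; rewrite fsrc in nsrc.
Qed.

Definition mu_witness U (g : F -> F) S1 S2 :=
  [/\ validU I U, g =1 sigmaU U, phi I S2 = g @: phi I S1,
      src U \subset delta I S1 & tgt U :&: (delta I S1 :\: src U) = set0].

Lemma in_muP g S1 S2 : in_mu I g S1 S2 <-> exists U, mu_witness U g S1 S2.
Proof.
split=> [[U [vU [gU [phi2 [src1 tgt1]]]]] | [U [vU gU phi2 src1 tgt1]]]; exists U.
  by split.
by do 4 (split=> //).
Qed.

Lemma mu_witness_invU U g S1 S2 :
  mu_witness U g S1 S2 -> mu_witness (invU U) (sigmaU (invU U)) S2 S1.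
Proof.
move=> [vU gU phi2 src1 tgt1]; split=> //; first exact: validU_invU.
- rewrite phi2 -imset_comp (eq_in_imset (g := id)) ?imset_id // => f f1 /=.
  rewrite gU sigmaU_invUK //; apply/negP => ntgt.
  have f1blk : blk f \in delta I S1 by apply/deltaP; exists f.
  have : blk f \in tgt U :&: (delta I S1 :\: src U).
    by move: ntgt; rewrite in_setI !in_setD f1blk andbT => /andP[-> ->].
  by rewrite tgt1 in_set0.
- apply/subsetP => t; rewrite src_invU => /imsetP[p]; rewrite inE => /andP[pU _] ->.
  have /deltaP[f f1 fp] : p.1 \in delta I S1 by apply: (subsetP src1); apply: imset_f.
  apply/deltaP; exists (g f); first by rewrite phi2 imset_f.
  by rewrite gU (blk_sigmaU_src vU pU (esym fp)).
- apply/setP => i; rewrite in_set0 in_setI in_setD; apply/negbTE/and3P.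
  move=> -[ti ni /deltaP[h h2 hi]]; subst i.
  move: h2 ti ni; rewrite phi2 => /imsetP[f _ ->].
  by rewrite gU => /(blk_sigmaU_tgt_invU vU) ->.
Qed.

End DomainTranslations.

Theorem proposition5 (C1 C2 D1 D2 : natconcept) :
  entails [:: Analogy C1 C2 D1 D2] (Analogy C2 C1 D2 D1).
Proof.
move=> I [HI [satT _]].
have [g [/in_muP[U wU] /in_muP[U' wU']]] := satT _ (or_introl erefl).
have eq_invU : invU U = invU U'.
  case: wU wU' => vU gU _ _ _ [vU' gU' _ _ _].
  by apply: eq_sigmaU_invU => // f; rewrite -gU gU'.
exists (sigmaU I (invU U)); split; apply/in_muP.
  by exists (invU U); exact: (mu_witness_invU HI wU).
by rewrite eq_invU; exists (invU U'); exact: (mu_witness_invU HI wU').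
Qed.
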